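(* The Lie algebra $\mathcal W$ (even part of $W(m,n;\underline t)$, over a field of characteristic $p>3$, $m,n\ge3$) is generated by $\mathcal M\cup\mathcal N\cup\mathcal P$, where $\mathcal M=\{x^{(q\varepsilon_i)}D_j\mid 0\le q\le\pi_i,\ i,j\in Y_0\}$, $\mathcal N=\{x_ix_kD_l\mid i\in Y_0,\ k,l\in Y_1\}$, $\mathcal P=\{x_kx_lD_i\mid i\in Y_0,\ k,l\in Y_1\}$.
   Context: $\mathbb F$ is a field of characteristic $p>3$; $m,n\ge 3$; $\underline t=(t_1,\dots,t_m)$ positive integers, $\pi_i=p^{t_i}-1$. $Y_0=\{1,\dots,m\}$, $Y_1=\{m+1,\dots,m+n\}$, $Y=Y_0\cup Y_1$, $\tau(r)=\bar0$ on $Y_0$, $\bar1$ on $Y_1$. $\mathfrak A=\mathfrak A(m,n;\underline t)$ is the supercommutative superalgebra with basis $x^{(\alpha)}x^u$ ($\alpha\in\mathbb N_0^m$, $\alpha_i\le\pi_i$; $u$ an increasing sequence in $Y_1$, $x^u$ the product of the odd generators $x_k$, $k\in u$), with $x^{(\alpha)}x^{(\beta)}=\prod_i\binom{\alpha_i+\beta_i}{\alpha_i}x^{(\alpha+\beta)}$ (zero if some index exceeds $\pi_i$), anticommuting $x_k$, parity $|u|\bmod2$; $x_i=x^{(\varepsilon_i)}$ for $i\in Y_0$ and $\varepsilon_i$ is the $i$-th unit vector. $D_i$ ($i\in Y_0$) sends $x^{(\alpha)}x^u\mapsto x^{(\alpha-\varepsilon_i)}x^u$, $D_k$ ($k\in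 Y_1$) is the odd partial derivative $\partial/\partial x_k$; $D_r$ has parity $\tau(r)$. $W=W(m,n;\underline t)=\{\sum_{r\in Y} f_rD_r:f_r\in\mathfrak A\}$ with bracket $[fD_r,gD_s]=fD_r(g)D_s-(-1)^{\mathrm p(fD_r)\mathrm p(gD_s)}gD_s(f)D_r$; $x^{(\alpha)}x^uD_r$ has parity $|u|+\tau(r)$. $\mathcal W=W_{\bar0}$. *)

From HB Require Import structures.
From mathcomp Require Import all_boot all_order all_algebra.
Set Implicit Arguments. Unset Strict Implicit. Unset Printing Implicit Defensive.
Import GRing.Theory.
Local Open Scope ring_scope.

(* Witt superalgebra W(m,n;t) over F.  Y0 = 'I_m (indices 1..m), Y1 = 'I_n
   (indices m+1..m+n, order preserved). *)

(* multi-indices alpha with 0 <= alpha_i <= pi_i = p^(t_i) - 1 *)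
Definition mono (p m : nat) (t : 'I_m -> nat) :=
  {dffun forall i : 'I_m, 'I_(p ^ t i)}.
(* basis x^(alpha) x^u of the divided power superalgebra A(m,n;t) *)
Definition idxA (p m n : nat) (t : 'I_m -> nat) := (mono p t * {set 'I_n})%type.
Definition Yidx (m n : nat) := ('I_m + 'I_n)%type.
(* basis x^(alpha) x^u D_r of W *)
Definition idxW (p m n : nat) (t : 'I_m -> nat) := (idxA p n t * Yidx m n)%type.

Notation Alg F p n t := {ffun idxA p n t -> F}.
Notation Witt F p n t := {ffun idxW p n t -> F}.

Section Witt.
Variables (F : fieldType) (p m n : nat) (t : 'I_m -> nat).
Local Notation A := (Alg F p n t).
Local Notation W := (Witt F p n t).

Definition tau (r : Yidx m n) : bool := if r is inr _ then true else false.
Definition parW (b : idxW p n t) : bool := odd #|b.1.2| (+) tau b.2.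

(* coefficient of x^(gamma) x^w in x^(alpha) x^u * x^(beta) x^v *)
Definition mcoef (a b c : idxA p n t) : F :=
  if [forall i, val (c.1 i) == (val (a.1 i) + val (b.1 i))%N]
     && (a.2 :&: b.2 == set0) && (c.2 == a.2 :|: b.2)
  then (\prod_(i < m) 'C(val (a.1 i) + val (b.1 i), val (a.1 i)))%:R
       * (-1) ^+ #|[set kl in setX a.2 b.2 | (kl.2 < kl.1)%N]|
  else 0.

Definition mulA (f g : A) : A :=
  [ffun c => \sum_(a : idxA p n t) \sum_(b : idxA p n t) f a * g b * mcoef a b c].

(* coefficient of x^(beta) x^v in D_r (x^(alpha) x^u) *)
Definition dcoef (r : Yidx m n) (a c : idxA p n t) : F :=
  match r with
  | inl i => if (val (c.1 i)).+1 == val (a.1 i)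
                 then ([forall j, (j != i) ==> (val (c.1 j) == val (a.1 j))]
                        && (c.2 == a.2))%:R
                 else 0
  | inr k => if (k \in a.2) && (c.1 == a.1) && (c.2 == a.2 :\ k)
             then (-1) ^+ #|[set l in a.2 | (l < k)%N]| else 0
  end.

Definition derA (r : Yidx m n) (f : A) : A :=
  [ffun c => \sum_(a : idxA p n t) f a * dcoef r a c].

Definition eA (a : idxA p n t) : A := [ffun c => (c == a)%:R].

Definition scW (k : F) (X : W) : W := [ffun b => k * X b].

Definition vD (f : A) (r : Yidx m n) : W :=
  [ffun b => if b.2 == r then f b.1 else 0].

(* bracket of basis elements
   [f D_r, g D_s] = f D_r(g) D_s - (-1)^(|f D_r||g D_s|) g D_s(f) D_r *)
Definition brb (b c : idxW p n t) : W :=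
  vD (mulA (eA b.1) (derA b.2 (eA c.1))) c.2
  - scW ((-1) ^+ (parW b && parW c)) (vD (mulA (eA c.1) (derA c.2 (eA b.1))) b.2).

Definition brW (X Y : W) : W :=
  \sum_(b : idxW p n t) \sum_(c : idxW p n t) scW (X b * Y c) (brb b c).

Definition evenW (X : W) : Prop := forall b, X b != 0 -> parW b = false.

Inductive genLie (S : W -> Prop) : W -> Prop :=
  | genLie_base X : S X -> genLie S X
  | genLie_zero : genLie S 0
  | genLie_add X Y : genLie S X -> genLie S Y -> genLie S (X + Y)
  | genLie_scale (c : F) X : genLie S X -> genLie S (scW c X)
  | genLie_br X Y : genLie S X -> genLie S Y -> genLie S (brW X Y).

Definition xdp (i : 'I_m) (q : nat) : A :=
  [ffun a : idxA p n t => ((a.2 == set0) &&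
              [forall j, val (a.1 j) == (if j == i then q else 0%N)])%:R].
Definition xev (i : 'I_m) : A := xdp i 1.
Definition xod (k : 'I_n) : A :=
  [ffun a : idxA p n t => ((a.2 == [set k]) && [forall j, val (a.1 j) == 0%N])%:R].

Definition genM (X : W) : Prop :=
  exists (i j : 'I_m) (q : nat), (q <= p ^ t i - 1)%N /\ X = vD (xdp i q) (inl j).
Definition genN (X : W) : Prop :=
  exists (i : 'I_m) (k l : 'I_n), X = vD (mulA (xev i) (xod k)) (inr l).
Definition genP (X : W) : Prop :=
  exists (i : 'I_m) (k l : 'I_n), X = vD (mulA (xod k) (xod l)) (inl i).

End Witt.

From mathcomp Require Import all_boot all_order all_algebra.
Set Implicit Arguments. Unset Strict Implicit. Unset Printing Implicit Defensive.
Import GRing.Theory.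
Local Open Scope ring_scope.

(* The bracket of two basis elements x^(a) x^u D_r and x^(c) x^v D_s is a
   combination of at most two basis elements with explicit coefficients, so
   brackets of even elements are even, and the generators are even.
   Conversely, bracketing with D_j = x^(0) D_j lowers an exponent by one,
   bracketing with x^(q e_i) D_s trades one unit of the s-th exponent for a q in
   coordinate i, and bracketing x^(q e_i) D_i with an element whose i-th exponent
   is 1 raises it to q with coefficient 1 - q, which is 2 != 0 for q = pi_i.
   Starting from the generators D_s these moves give every x^(a) D_j.  Each
   P-element x_k x_l D_i adjoins two odd variables, which gives all even
   x^(a) x^u D_j by induction on |u|, and bracketing those with the N-elements
   x_i x_k D_l gives the even x^(a) x^u D_l with |u| odd. *)

Section WittBasis.
Variables (F : fieldType) (p m n : nat) (t : 'I_m -> nat).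
Hypothesis p_gt0 : (0 < p)%N.
Local Notation A := (Alg F p n t).
Local Notation W := (Witt F p n t).
Local Notation IA := (idxA p n t).
Local Notation IW := (idxW p n t).
Local Notation P j := (p ^ t j)%N.

Lemma expt_gt0 j : (0 < P j)%N. Proof. by rewrite expn_gt0 p_gt0. Qed.

Definition bounded (f : 'I_m -> nat) := forall j, (f j < P j)%N.

(* Exponents are reduced modulo [p ^ t j], which does nothing on bounded [f]. *)
Definition mono_of (f : 'I_m -> nat) : mono p t :=
  [ffun j => Ordinal (ltn_pmod (f j) (expt_gt0 j))].

Lemma mono_ofE f j : val (mono_of f j) = (f j %% P j)%N.
Proof. by rewrite ffunE. Qed.

Lemma mono_of_small f j : (f j < P j)%N -> val (mono_of f j) = f j.
Proof. by move=> lt_fj; rewrite mono_ofE modn_small. Qed.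

Lemma eq_mono (a b : mono p t) : (forall j, val (a j) = val (b j)) -> a = b.
Proof. by move=> eq_ab; apply/ffunP => j; apply/val_inj; exact: eq_ab. Qed.

Lemma eq_mono_of f g : f =1 g -> mono_of f = mono_of g.
Proof. by move=> eq_fg; apply: eq_mono => j; rewrite !mono_ofE eq_fg. Qed.

Definition idx (f : 'I_m -> nat) (u : {set 'I_n}) : IA := (mono_of f, u).

Lemma eq_idx f g u : f =1 g -> idx f u = idx g u.
Proof. by move=> eq_fg; rewrite /idx (eq_mono_of eq_fg). Qed.

Lemma mono_of_val (a : mono p t) : mono_of (fun j => val (a j)) = a.
Proof. by apply: eq_mono => j; rewrite mono_of_small ?ltn_ord. Qed.

Lemma idx_val (a : IA) : a = idx (fun j => val (a.1 j)) a.2.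
Proof. by rewrite /idx mono_of_val -surjective_pairing. Qed.

Definition der_idx (r : Yidx m n) (a : IA) : IA :=
  match r with
  | inl i => (mono_of (fun j => if j == i then (val (a.1 j)).-1 else val (a.1 j)), a.2)
  | inr k => (a.1, a.2 :\ k)
  end.

Definition der_coef (r : Yidx m n) (a : IA) : F :=
  match r with
  | inl i => (0 < val (a.1 i))%N%:R
  | inr k => if k \in a.2 then (-1) ^+ #|[set l in a.2 | (l < k)%N]| else 0
  end.

Lemma dcoefE r a c : dcoef F r a c = if c == der_idx r a then der_coef r a else 0.
Proof.
case: r => [i|k] /=; last first.
  case: (c =P (a.1, a.2 :\ k)) => [->|ne_c]; first by rewrite /= !eqxx !andbT.
  case: ifP => // /andP [/andP [_ /eqP c1]] /eqP c2.
  by case: ne_c; rewrite -c1 -c2 -surjective_pairing.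
have der_val j : (mono_of (fun j => if j == i then (a.1 j).-1 else a.1 j) j : nat)
    = if j == i then (a.1 j).-1 else a.1 j.
  rewrite mono_of_small //; case: ifP => _; last exact: ltn_ord.
  exact: leq_ltn_trans (leq_pred _) (ltn_ord _).
case: (c =P _) => [->|ne_c].
  rewrite der_val eqxx; case: (posnP (a.1 i)) => [->|a_i_gt0] //=.
  rewrite prednK // !eqxx andbT; case: forallP => // not_all; case: not_all => j.
  by apply/implyP => /negbTE ne_ji; rewrite der_val ne_ji.
case: ifP => // /eqP c_i.
case: forallP => //= c_j; case: eqP => //= c_2.
case: ne_c; rewrite [c]surjective_pairing c_2; congr (_, _).
apply: eq_mono => j /=; rewrite der_val; case: eqP => [->|/eqP ne_ji]; first by rewrite -c_i.
exact/eqP/(implyP (c_j j)).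
Qed.

Definition mul_idx (a b : IA) : IA :=
  (mono_of (fun j => val (a.1 j) + val (b.1 j))%N, a.2 :|: b.2).

Definition mul_coef (a b : IA) : F :=
  if [forall i, (val (a.1 i) + val (b.1 i) < P i)%N] && (a.2 :&: b.2 == set0)
  then (\prod_(i < m) 'C(val (a.1 i) + val (b.1 i), val (a.1 i)))%:R
       * (-1) ^+ #|[set kl in setX a.2 b.2 | (kl.2 < kl.1)%N]|
  else 0.

Lemma mcoefE a b c : mcoef F a b c = if c == mul_idx a b then mul_coef a b else 0.
Proof.
rewrite /mcoef /mul_coef; case: (c =P mul_idx a b) => [->|ne_c].
  rewrite eqxx andbT; congr (if _ && _ then _ else _).
  apply/forallP/forallP => bnd i; last by rewrite mono_of_small.
  by rewrite -(eqP (bnd i)) mono_ofE ltn_pmod ?expt_gt0.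
case: ifP => // /andP [/andP [/forallP c_1 _] /eqP c_2].
case: ne_c; rewrite [c]surjective_pairing /mul_idx c_2; congr (_, _).
by rewrite -[c.1]mono_of_val; apply: eq_mono_of => j; apply/eqP.
Qed.

Lemma derA_eA r (a : IA) :
  derA r (eA F a) = [ffun c => if c == der_idx r a then der_coef r a else 0].
Proof.
apply/ffunP => c; rewrite !ffunE (bigD1 a) //= [X in _ + X]big1 => [|b /negbTE ne_ba].
  by rewrite ffunE eqxx mul1r addr0 dcoefE.
by rewrite ffunE ne_ba mul0r.
Qed.

Lemma mulA_eAl (a : IA) (g : A) :
  mulA (eA F a) g = [ffun e => \sum_d g d * mcoef F a d e].
Proof.
apply/ffunP => e; rewrite !ffunE (bigD1 a) //= [X in _ + X]big1 => [|b /negbTE ne_ba].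
  by rewrite addr0; apply: eq_bigr => d _; rewrite ffunE eqxx mul1r.
by rewrite big1 // => d _; rewrite ffunE ne_ba !mul0r.
Qed.

Lemma mulA_eA (a b : IA) :
  mulA (eA F a) (eA F b) = [ffun e => if e == mul_idx a b then mul_coef a b else 0].
Proof.
rewrite mulA_eAl; apply/ffunP => e.
rewrite !ffunE (bigD1 b) //= [X in _ + X]big1 => [|d /negbTE ne_db].
  by rewrite ffunE eqxx mul1r mcoefE addr0.
by rewrite ffunE ne_db mul0r.
Qed.

Lemma mulA_eA_derA (a : IA) r c :
  mulA (eA F a) (derA r (eA F c)) =
  [ffun e => if e == mul_idx a (der_idx r c) then der_coef r c * mul_coef a (der_idx r c)
             else 0].
Proof.
rewrite mulA_eAl derA_eA; apply/ffunP => e.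
rewrite !ffunE (bigD1 (der_idx r c)) //= [X in _ + X]big1 => [|d /negbTE ne_d].
  by rewrite ffunE eqxx mcoefE addr0; case: ifP; rewrite ?mulr0.
by rewrite ffunE ne_d mul0r.
Qed.

Definition eW (b : IW) : W := [ffun x => (x == b)%:R].

Lemma scW0 (X : W) : scW 0 X = 0.
Proof. by apply/ffunP => x; rewrite !ffunE mul0r. Qed.

Lemma scW1 (X : W) : scW 1 X = X.
Proof. by apply/ffunP => x; rewrite !ffunE mul1r. Qed.

Lemma scWA a b (X : W) : scW a (scW b X) = scW (a * b) X.
Proof. by apply/ffunP => x; rewrite !ffunE mulrA. Qed.

Lemma scWN1 (X : W) : scW (-1) X = - X.
Proof. by apply/ffunP => x; rewrite !ffunE mulN1r. Qed.

Lemma scWBl a b (X : W) : scW a X - scW b X = scW (a - b) X.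
Proof. by apply/ffunP => x; rewrite !ffunE mulrBl. Qed.

Lemma W_sum_eW (X : W) : X = \sum_b scW (X b) (eW b).
Proof.
apply/ffunP => x; rewrite sum_ffunE (bigD1 x) //= [X in _ + X]big1 => [|b ne_bx].
  by rewrite !ffunE eqxx mulr1 addr0.
by rewrite !ffunE eq_sym (negbTE ne_bx) mulr0.
Qed.

Lemma vD_single (f : A) (e : IA) (k : F) r :
  f = [ffun x => if x == e then k else 0] -> vD f r = scW k (eW (e, r)).
Proof.
move=> ->; apply/ffunP => x; rewrite !ffunE [x]surjective_pairing xpair_eqE /=.
by case: (x.2 =P r) => _; case: (x.1 =P e) => _; rewrite ?ffunE ?mulr1 ?mulr0.
Qed.

Lemma vD_eA (a : IA) r : vD (eA F a) r = eW (a, r).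
Proof.
rewrite (@vD_single _ a 1) ?scW1 //.
by apply/ffunP => x; rewrite !ffunE; case: (x == a).
Qed.

(* [[x^a D_r, x^c D_s] = br_coef1 * x^(a + c - e_r) D_s - br_coef2 * x^(c + a - e_s) D_r] *)
Definition br_coef1 (b c : IW) : F := der_coef b.2 c.1 * mul_coef b.1 (der_idx b.2 c.1).
Definition br_idx1 (b c : IW) : IW := (mul_idx b.1 (der_idx b.2 c.1), c.2).
Definition br_coef2 (b c : IW) : F :=
  (-1) ^+ (parW b && parW c) * (der_coef c.2 b.1 * mul_coef c.1 (der_idx c.2 b.1)).
Definition br_idx2 (b c : IW) : IW := (mul_idx c.1 (der_idx c.2 b.1), b.2).

Lemma brbE b c :
  brb F b c = scW (br_coef1 b c) (eW (br_idx1 b c)) - scW (br_coef2 b c) (eW (br_idx2 b c)).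
Proof. by rewrite /brb !(vD_single _ (mulA_eA_derA _ _ _)) scWA. Qed.

Lemma brW_eW b c : brW (eW b) (eW c) = brb F b c.
Proof.
rewrite /brW (bigD1 b) //= [X in _ + X]big1 => [|b' /negbTE ne_b].
  rewrite addr0 (bigD1 c) //= [X in _ + X]big1 => [|c' /negbTE ne_c].
    by rewrite addr0 !ffunE !eqxx mul1r scW1.
  by rewrite !ffunE ne_c mulr0 scW0.
by rewrite big1 // => c' _; rewrite !ffunE ne_b mul0r scW0.
Qed.

Arguments mono_of : simpl never.
Arguments idx : simpl never.
Arguments der_idx : simpl never.
Arguments der_coef : simpl never.
Arguments mul_idx : simpl never.
Arguments mul_coef : simpl never.

Definition dec_exp (f : 'I_m -> nat) i j := if j == i then (f j).-1 else f j.
Definition set_exp (f : 'I_m -> nat) i v j := if j == i then v else f j.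
Definition eps_exp i v (j : 'I_m) := if j == i then v else 0%N.
Definition zero_exp (j : 'I_m) := 0%N.

Lemma bounded_dec f i : bounded f -> bounded (dec_exp f i).
Proof.
by move=> bf j; rewrite /dec_exp; case: ifP => _ //; apply: leq_ltn_trans (leq_pred _) (bf j).
Qed.

Lemma bounded_set f i v : bounded f -> (v < P i)%N -> bounded (set_exp f i v).
Proof. by move=> bf lt_v j; rewrite /set_exp; case: eqP => [->|]. Qed.

Lemma bounded_eps i v : (v < P i)%N -> bounded (eps_exp i v).
Proof. by move=> lt_v j; rewrite /eps_exp; case: eqP => [->|] //; rewrite expt_gt0. Qed.

Lemma bounded_zero : bounded zero_exp.
Proof. exact: expt_gt0. Qed.

Lemma der_idx_inl s f u : bounded f -> der_idx (inl s) (idx f u) = idx (dec_exp f s) u.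
Proof. by move=> bf; congr (_, _); apply: eq_mono_of => j; rewrite mono_of_small. Qed.

Lemma der_coef_inl s f u : bounded f -> der_coef (inl s) (idx f u) = (0 < f s)%N%:R.
Proof. by move=> bf; rewrite /der_coef /idx /= mono_of_small. Qed.

Lemma der_coef_eps r i q : (q < P i)%N ->
  der_coef r (idx (eps_exp i q) set0) = ((r == inl i) && (0 < q)%N)%:R.
Proof.
case: r => [s|k] lt_q; last by rewrite /der_coef /idx /= in_set0.
rewrite der_coef_inl; last exact: bounded_eps.
rewrite /eps_exp; case: (eqVneq s i) => [->|ne_si]; first by rewrite !eqxx.
by case: eqP => // -[eq_si]; rewrite eq_si eqxx in ne_si.
Qed.

Lemma der_coef_zero s u : der_coef (inl s) (idx zero_exp u) = 0.
Proof. by rewrite der_coef_inl //; exact: bounded_zero. Qed.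

Lemma mul_idx_idx f g u v : mul_idx (idx f u) (idx g v) = idx (fun j => f j + g j)%N (u :|: v).
Proof. by congr (_, _); apply: eq_mono => j; rewrite !mono_ofE modnDm. Qed.

Lemma mul_coef_idx f g u v : bounded f -> bounded g ->
  mul_coef (idx f u) (idx g v) =
  if [forall i, (f i + g i < P i)%N] && (u :&: v == set0)
  then (\prod_(i < m) 'C(f i + g i, f i))%:R
       * (-1) ^+ #|[set kl in setX u v | (kl.2 < kl.1)%N]|
  else 0.
Proof.
move=> bf bg; rewrite /mul_coef /= (eq_bigr (fun i => 'C(f i + g i, f i))).
  by congr (if _ && _ then _ else _); apply/eq_forallb => i; rewrite !mono_of_small.
by move=> i _; rewrite !mono_of_small.
Qed.

Lemma inversions_set0l (v : {set 'I_n}) :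
  #|[set kl in setX (set0 : {set 'I_n}) v | (kl.2 < kl.1)%N]| = 0%N.
Proof. by apply/eqP; rewrite cards_eq0; apply/eqP/setP => kl; rewrite !inE. Qed.

Lemma inversions_set0r (v : {set 'I_n}) :
  #|[set kl in setX v (set0 : {set 'I_n}) | (kl.2 < kl.1)%N]| = 0%N.
Proof. by apply/eqP; rewrite cards_eq0; apply/eqP/setP => kl; rewrite !inE andbF. Qed.

Lemma mul_coef_zerol v f u : bounded f ->
  mul_coef (idx zero_exp v) (idx f u) =
  if v :&: u == set0 then (-1) ^+ #|[set kl in setX v u | (kl.2 < kl.1)%N]| else 0.
Proof.
move=> bf; rewrite mul_coef_idx //; last exact: bounded_zero.
rewrite (_ : [forall j, _] = true) /=; last by apply/forallP => j; rewrite add0n.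
by case: ifP => // _; rewrite big1 ?mul1r // => j _; rewrite bin0.
Qed.

Lemma mul_coef_zeror v f u : bounded f ->
  mul_coef (idx f u) (idx zero_exp v) =
  if u :&: v == set0 then (-1) ^+ #|[set kl in setX u v | (kl.2 < kl.1)%N]| else 0.
Proof.
move=> bf; rewrite mul_coef_idx //; last exact: bounded_zero.
rewrite (_ : [forall j, _] = true) /=; last by apply/forallP => j; rewrite addn0.
by case: ifP => // _; rewrite big1 ?mul1r // => j _; rewrite addn0 binn.
Qed.

Lemma mul_coef_epsl i v f u : (v < P i)%N -> bounded f ->
  mul_coef (idx (eps_exp i v) set0) (idx f u) =
  if (v + f i < P i)%N then 'C(v + f i, v)%:R else 0.
Proof.
move=> lt_v bf; rewrite (mul_coef_idx _ _ (bounded_eps lt_v) bf) set0I eqxx andbT.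
rewrite inversions_set0l expr0 mulr1 (bigD1 i) //= big1 => [|j /negbTE ne_ji]; last first.
  by rewrite /eps_exp ne_ji bin0.
rewrite muln1 /eps_exp eqxx; congr (if _ then _ else _).
apply/forallP/idP => [/(_ i)|lt_vf j]; first by rewrite eqxx.
by case: eqP => [->|_]; rewrite ?add0n.
Qed.

Lemma mul_coef_epsr i v f u : (v < P i)%N -> bounded f ->
  mul_coef (idx f u) (idx (eps_exp i v) set0) =
  if (f i + v < P i)%N then 'C(f i + v, f i)%:R else 0.
Proof.
move=> lt_v bf; rewrite (mul_coef_idx _ _ bf (bounded_eps lt_v)) setI0 eqxx andbT.
rewrite inversions_set0r expr0 mulr1 (bigD1 i) //= big1 => [|j /negbTE ne_ji]; last first.
  by rewrite /eps_exp ne_ji addn0 binn.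
rewrite muln1 /eps_exp eqxx; congr (if _ then _ else _).
apply/forallP/idP => [/(_ i)|lt_fv j]; first by rewrite eqxx.
by case: eqP => [->|_]; rewrite ?addn0.
Qed.

Lemma der_coef_inr k (a : IA) : k \notin a.2 -> der_coef (inr k) a = 0.
Proof. by rewrite /der_coef => /negbTE ->. Qed.

Lemma dec_eps_exp i q : dec_exp (eps_exp i q) i =1 eps_exp i q.-1.
Proof. by move=> j; rewrite /dec_exp /eps_exp; case: eqP. Qed.

Lemma eps_exp0 i : eps_exp i 0 =1 zero_exp.
Proof. by move=> j; rewrite /eps_exp; case: eqP. Qed.

Lemma parW_eps i q s : parW (idx (eps_exp i q) set0, inl s) = false.
Proof. by rewrite /parW /idx /= cards0. Qed.

Lemma der_idx_eps i q u : (q < P i)%N ->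
  der_idx (inl i) (idx (eps_exp i q) u) = idx (eps_exp i q.-1) u.
Proof.
by move=> lt_q; rewrite der_idx_inl ?(eq_idx _ (dec_eps_exp i q)) //; exact: bounded_eps.
Qed.

Lemma evenWP (X : W) : evenW X <-> (forall b, parW b -> X b = 0).
Proof.
split=> even_X b; first by move=> odd_b; apply/eqP; apply: contraTT odd_b => /even_X ->.
by move=> nz_b; apply/negbTE; apply: contra nz_b => /even_X ->.
Qed.

Lemma mul_coef_disjoint a d : mul_coef a d != 0 -> a.2 :&: d.2 = set0.
Proof. by rewrite /mul_coef; case: ifP => [/andP [_ /eqP] //|_]; rewrite eqxx. Qed.

Lemma der_coef_parity r c :
  der_coef r c != 0 -> odd #|c.2| = odd #|(der_idx r c).2| (+) tau r.
Proof.
case: r => [i|k]; rewrite /der_coef /der_idx /=; first by rewrite addbF.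
by case: ifP => [k_c _|_]; [rewrite (cardsD1 k c.2) k_c addbT | rewrite eqxx].
Qed.

Lemma parW_br_idx1 b c : br_coef1 b c != 0 -> parW (br_idx1 b c) = parW b (+) parW c.
Proof.
rewrite /br_coef1 mulf_eq0 negb_or => /andP [nz_der /mul_coef_disjoint disj].
rewrite /parW /= cardsU disj cards0 subn0 oddD (der_coef_parity nz_der).
by case: (odd #|b.1.2|); case: (odd #|(der_idx b.2 c.1).2|); case: (tau b.2); case: (tau c.2).
Qed.

Lemma parW_br_idx2 b c : br_coef2 b c != 0 -> parW (br_idx2 b c) = parW b (+) parW c.
Proof. by rewrite /br_coef2 mulf_eq0 negb_or addbC => /andP [_ /parW_br_idx1]. Qed.

Lemma evenW_brW (X Y : W) : evenW X -> evenW Y -> evenW (brW X Y).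
Proof.
move=> /evenWP even_X /evenWP even_Y; apply/evenWP => x odd_x.
rewrite /brW sum_ffunE big1 // => b _; rewrite sum_ffunE big1 // => c _.
rewrite ffunE brbE !ffunE.
have [odd_b|even_b] := boolP (parW b); first by rewrite even_X // !mul0r.
have [odd_c|even_c] := boolP (parW c); first by rewrite even_Y // mulr0 mul0r.
suff [-> ->] : br_coef1 b c * (x == br_idx1 b c)%:R = 0
            /\ br_coef2 b c * (x == br_idx2 b c)%:R = 0 by rewrite subr0 mulr0.
split.
  have [->|nz1] := eqVneq (br_coef1 b c) 0; first by rewrite mul0r.
  case: eqP => [eq_x|_]; last by rewrite mulr0.
  by move: odd_x; rewrite eq_x parW_br_idx1 // (negbTE even_b) (negbTE even_c).
have [->|nz2] := eqVneq (br_coef2 b c) 0; first by rewrite mul0r.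
case: eqP => [eq_x|_]; last by rewrite mulr0.
by move: odd_x; rewrite eq_x parW_br_idx2 // (negbTE even_b) (negbTE even_c).
Qed.

Lemma evenW0 : evenW (0 : W).
Proof. by move=> b; rewrite ffunE eqxx. Qed.

Lemma evenW_add (X Y : W) : evenW X -> evenW Y -> evenW (X + Y).
Proof.
move=> /evenWP even_X /evenWP even_Y; apply/evenWP => b odd_b.
by rewrite ffunE even_X // even_Y // addr0.
Qed.

Lemma evenW_scW k (X : W) : evenW X -> evenW (scW k X).
Proof. by move=> /evenWP even_X; apply/evenWP => b odd_b; rewrite ffunE even_X // mulr0. Qed.

Lemma evenW_eW b : parW b = false -> evenW (eW b).
Proof. by move=> even_b x; rewrite ffunE; have [-> //|_] := eqVneq x b; rewrite eqxx. Qed.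

Lemma xdpE i q : (q < P i)%N -> xdp F p n t i q = eA F (idx (eps_exp i q) set0).
Proof.
move=> lt_q; apply/ffunP => a; rewrite !ffunE; congr (nat_of_bool _)%:R.
apply/andP/eqP => [[/eqP a_2 /forallP a_1]|->]; last first.
  by split=> //; apply/forallP => j; rewrite /= mono_of_small //; exact: bounded_eps.
rewrite [a]surjective_pairing a_2 -[a.1]mono_of_val; congr (_, _).
by apply: eq_mono_of => j; apply/eqP.
Qed.

Lemma xodE k : xod F p t k = eA F (idx zero_exp [set k]).
Proof.
apply/ffunP => a; rewrite !ffunE; congr (nat_of_bool _)%:R.
apply/andP/eqP => [[/eqP a_2 /forallP a_1]|->]; last first.
  by split=> //; apply/forallP => j; rewrite /= mono_of_small //; exact: bounded_zero.
rewrite [a]surjective_pairing a_2 -[a.1]mono_of_val; congr (_, _).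
by apply: eq_mono_of => j; apply/eqP.
Qed.

Lemma vD_xev_xod i k l : (1 < P i)%N ->
  vD (mulA (xev F p n t i) (xod F p t k)) (inr l) = eW (idx (eps_exp i 1) [set k], inr l).
Proof.
move=> lt_1; rewrite /xev xdpE // xodE (vD_single _ (mulA_eA _ _)) mul_idx_idx set0U.
rewrite mul_coef_epsl //; last exact: bounded_zero.
rewrite addn0 lt_1 binn scW1.
by rewrite (@eq_idx _ (eps_exp i 1)) // => j; rewrite addn0.
Qed.

Lemma vD_xod_xod i k l :
  vD (mulA (xod F p t k) (xod F p t l)) (inl i) =
  scW (mul_coef (idx zero_exp [set k]) (idx zero_exp [set l]))
      (eW (idx zero_exp [set k; l], inl i)).
Proof. by rewrite !xodE (vD_single _ (mulA_eA _ _)) mul_idx_idx (@eq_idx _ zero_exp). Qed.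

Lemma mul_coef_xod_eq0 k l :
  (mul_coef (idx zero_exp [set k]) (idx zero_exp [set l]) == 0) = (k == l).
Proof.
rewrite mul_coef_zerol; last exact: bounded_zero.
have [->|ne_kl] := eqVneq k l; first by rewrite setIid -cards_eq0 cards1 !eqxx.
suff -> : [set k] :&: [set l] == set0 by rewrite signr_eq0.
by apply/eqP/setP => x; rewrite !inE; case: eqP => // ->; exact: negbTE.
Qed.

Section GeneratedSubalgebra.
Variable S : W -> Prop.
Local Notation G := (genLie S).

Lemma gen_opp X : G X -> G (- X).
Proof. by move=> GX; rewrite -scWN1; apply: genLie_scale. Qed.

Lemma gen_sub X Y : G X -> G Y -> G (X - Y).
Proof. by move=> GX GY; apply: genLie_add => //; apply: gen_opp. Qed.

Lemma gen_scale_inv k X : k != 0 -> G (scW k X) -> G X.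
Proof. by move=> nz_k GkX; rewrite -[X]scW1 -(mulVf nz_k) -scWA; apply: genLie_scale. Qed.

Lemma gen_sum (I : finType) (f : I -> W) : (forall i, G (f i)) -> G (\sum_i f i).
Proof.
move=> Gf; apply: (big_ind G); [exact: genLie_zero | | by move=> i _].
by move=> X Y; apply: genLie_add.
Qed.

Lemma gen_brb b c : G (eW b) -> G (eW c) ->
  G (scW (br_coef1 b c) (eW (br_idx1 b c)) - scW (br_coef2 b c) (eW (br_idx2 b c))).
Proof. by move=> Gb Gc; rewrite -brbE -brW_eW; apply: genLie_br. Qed.

Lemma gen_br_idx1 b c : G (eW b) -> G (eW c) -> br_coef1 b c != 0 ->
  br_coef2 b c = 0 \/ G (eW (br_idx2 b c)) -> G (eW (br_idx1 b c)).
Proof.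
move=> Gb Gc nz1 G2; apply: (gen_scale_inv nz1); have := gen_brb Gb Gc.
set X1 := scW _ (eW (br_idx1 b c)); set X2 := scW _ (eW (br_idx2 b c)).
case: G2 => [k2_0|G2] G12; first by rewrite /X2 k2_0 scW0 subr0 in G12.
by rewrite -(subrK X2 X1); apply: genLie_add => //; apply: genLie_scale.
Qed.

Lemma gen_br_idx2 b c : G (eW b) -> G (eW c) -> br_coef2 b c != 0 ->
  br_coef1 b c = 0 \/ G (eW (br_idx1 b c)) -> G (eW (br_idx2 b c)).
Proof.
move=> Gb Gc nz2 G1; apply: (gen_scale_inv nz2); have := gen_brb Gb Gc.
set X1 := scW _ (eW (br_idx1 b c)); set X2 := scW _ (eW (br_idx2 b c)).
case: G1 => [k1_0|G1] G12.
  by rewrite /X1 k1_0 scW0 sub0r in G12; rewrite -[X2]opprK; apply: gen_opp.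
by rewrite -[X2](subKr X1); apply: gen_sub => //; apply: genLie_scale.
Qed.

Lemma gen_br_idx_eq b c : G (eW b) -> G (eW c) -> br_idx2 b c = br_idx1 b c ->
  br_coef1 b c - br_coef2 b c != 0 -> G (eW (br_idx1 b c)).
Proof.
move=> Gb Gc eq_idx12 nz; apply: (gen_scale_inv nz).
by have := gen_brb Gb Gc; rewrite eq_idx12 scWBl.
Qed.

End GeneratedSubalgebra.

Lemma exp_coordinatewise (Q : ('I_m -> nat) -> Prop) (f g : 'I_m -> nat) :
  (forall h h', h =1 h' -> Q h -> Q h') ->
  (forall h i, (forall j, h j = f j \/ h j = g j) -> h i = f i -> Q h ->
     Q (set_exp h i (g i))) ->
  Q f -> Q g.
Proof.
move=> Q_ext Q_step Qf.
pose mix k (j : 'I_m) := if (j < k)%N then g j else f j.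
suff Q_mix k : (k <= m)%N -> Q (mix k).
  by apply: Q_ext (Q_mix m (leqnn m)) => j; rewrite /mix ltn_ord.
elim: k => [_|k IH lt_km]; first by apply: Q_ext Qf => j.
have := Q_step (mix k) (Ordinal lt_km) _ _ (IH (ltnW lt_km)).
rewrite /mix ltnn => Q_set; apply: Q_ext (Q_set _ erefl) => [j|j]; last first.
  by case: ifP => _; [right | left].
rewrite /set_exp [in RHS]ltnS [in RHS]leq_eqVlt.
case: eqP => [->|/eqP ne_j]; first by rewrite eqxx.
rewrite (_ : (j == k :> nat) = false) //.
by apply: contraNF ne_j => /eqP eq_jk; apply/eqP/val_inj.
Qed.

Definition all_ones (j : 'I_m) := 1%N.
Definition top_exp j := (P j).-1.
Definition ones_but k (j : 'I_m) := if j == k then 0%N else 1%N.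

Lemma bounded_top : bounded top_exp.
Proof. by move=> j; rewrite /top_exp ltn_predL expt_gt0. Qed.

Section Generation.
Variable S : W -> Prop.
Local Notation G := (genLie S).
Hypothesis natr_expt0 : forall i, (P i)%:R = 0 :> F.
Hypothesis two_neq0 : 2%:R != 0 :> F.
Hypothesis gen_M : forall i s q, (q < P i)%N -> G (eW (idx (eps_exp i q) set0, inl s)).
Hypothesis gen_N : forall i k l, G (eW (idx (eps_exp i 1) [set k], inr l)).
Hypothesis gen_P : forall i k l, k != l -> G (eW (idx zero_exp [set k; l], inl i)).

Lemma expt_gt2 i : (2 < P i)%N.
Proof.
have := two_neq0; move: (natr_expt0 i) (expt_gt0 i).
by case: (P i) => [|[|[|q]]] // => [/eqP|->]; rewrite ?oner_eq0 ?eqxx.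
Qed.

Lemma expt_gt1 i : (1 < P i)%N.
Proof. exact: ltnW (expt_gt2 i). Qed.

Lemma one_sub_top_neq0 i : 1 - (top_exp i)%:R != 0 :> F.
Proof. by rewrite /top_exp -subn1 natrB ?expt_gt0 // natr_expt0 sub0r opprK. Qed.

(* The last hypothesis makes the term D_r(x^(q e_i)) of the bracket vanish. *)
Lemma gen_bracket_M i s q f g u r :
    bounded f -> (0 < f s)%N -> (forall j, g j = eps_exp i q j + dec_exp f s j)%N ->
    (g i < P i)%N -> 'C(g i, q)%:R != 0 :> F -> (r != inl i) || (q == 0%N) ->
  G (eW (idx f u, r)) -> G (eW (idx g u, r)).
Proof.
move=> bf f_s g_def lt_gi nz_bin r_q Gf.
have g_i : (q + dec_exp f s i)%N = g i by rewrite g_def /eps_exp eqxx.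
have lt_q : (q < P i)%N by apply: leq_ltn_trans lt_gi; rewrite -g_i leq_addr.
have -> : (idx g u, r) = br_idx1 (idx (eps_exp i q) set0, inl s) (idx f u, r).
  by rewrite /br_idx1 /= der_idx_inl // mul_idx_idx set0U (eq_idx _ g_def).
apply: gen_br_idx1 (gen_M s lt_q) Gf _ _.
  rewrite /br_coef1 /= der_idx_inl // der_coef_inl // f_s mul1r.
  by rewrite (mul_coef_epsl _ lt_q (bounded_dec s bf)) g_i lt_gi.
left; rewrite /br_coef2 /= der_coef_eps //.
by case/orP: r_q => [/negbTE -> | /eqP ->]; rewrite ?andbF /= mul0r mulr0.
Qed.

Lemma gen_lower j f u r : bounded f -> (0 < f j)%N ->
  G (eW (idx f u, r)) -> G (eW (idx (dec_exp f j) u, r)).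
Proof.
move=> bf f_j; apply: (gen_bracket_M (i := j) (s := j) (q := 0)) => //.
- by move=> x; rewrite eps_exp0.
- exact: bounded_dec.
- by rewrite bin0 oner_eq0.
- by rewrite orbT.
Qed.

Lemma gen_transfer i s q f u r : i != s -> bounded f -> f i = 0%N -> (0 < f s)%N ->
  (q < P i)%N -> r != inl i ->
  G (eW (idx f u, r)) -> G (eW (idx (set_exp (dec_exp f s) i q) u, r)).
Proof.
move=> ne_is bf f_i f_s lt_q ne_ri; apply: (gen_bracket_M (i := i) (q := q) bf f_s).
- move=> j; rewrite /set_exp /eps_exp /dec_exp.
  by case: eqP => [->|_]; rewrite ?(negbTE ne_is) ?f_i ?addn0.
- by rewrite /set_exp eqxx.
- by rewrite /set_exp eqxx binn oner_eq0.
- by rewrite ne_ri.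
Qed.

Lemma gen_raise_self i q f u : bounded f -> f i = 1%N -> (0 < q < P i)%N ->
  1 - q%:R != 0 :> F ->
  G (eW (idx f u, inl i)) -> G (eW (idx (set_exp f i q) u, inl i)).
Proof.
move=> bf f_i /andP [q_gt0 lt_q] nz Gf.
pose b : IW := (idx (eps_exp i q) set0, inl i); pose c : IW := (idx f u, inl i).
have lt_pred_q : (q.-1 < P i)%N by apply: leq_ltn_trans lt_q; exact: leq_pred.
have idx1 : br_idx1 b c = (idx (set_exp f i q) u, inl i).
  rewrite /br_idx1 /= der_idx_inl // mul_idx_idx set0U; congr (_, _); apply: eq_idx => j.
  by rewrite /set_exp /eps_exp /dec_exp; case: eqP => [->|]; rewrite ?f_i ?addn0.
have idx2 : br_idx2 b c = (idx (set_exp f i q) u, inl i).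
  rewrite /br_idx2 /= der_idx_eps //.
  rewrite mul_idx_idx setU0; congr (_, _); apply: eq_idx => j.
  by rewrite /set_exp /eps_exp; case: eqP => [->|]; rewrite ?f_i ?add1n ?prednK ?addn0.
have coef1 : br_coef1 b c = 1.
  rewrite /br_coef1 /= der_idx_inl // der_coef_inl // f_i mul1r.
  by rewrite (mul_coef_epsl _ lt_q (bounded_dec i bf)) /dec_exp eqxx f_i addn0 lt_q binn.
have coef2 : br_coef2 b c = q%:R.
  rewrite /br_coef2 parW_eps /= mul1r der_coef_eps // q_gt0 eqxx mul1r.
  rewrite der_idx_eps // (mul_coef_epsr _ lt_pred_q bf).
  by rewrite f_i add1n prednK // lt_q bin1.
rewrite -idx1; apply: (gen_br_idx_eq (b := b) (c := c)) (gen_M i lt_q) Gf _ _.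
  by rewrite idx1 idx2.
by rewrite coef1 coef2.
Qed.

Lemma gen_raise i q f u r : bounded f -> f i = 1%N -> (q < P i)%N ->
  (r = inl i -> 1 - q%:R != 0 :> F) ->
  G (eW (idx f u, r)) -> G (eW (idx (set_exp f i q) u, r)).
Proof.
move=> bf f_i lt_q nz.
have [r_i|] := boolP ((r != inl i) || (q == 0%N)).
  apply: (gen_bracket_M (i := i) (s := i) (q := q) bf) r_i; first by rewrite f_i.
  - move=> j; rewrite /set_exp /eps_exp /dec_exp.
    by case: eqP => [->|]; rewrite ?f_i ?addn0.
  - by rewrite /set_exp eqxx.
  - by rewrite /set_exp eqxx binn oner_eq0.
rewrite negb_or negbK -lt0n => /andP [/eqP r_i q_gt0].
by rewrite r_i; apply: gen_raise_self => //; [rewrite q_gt0 | exact: nz].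
Qed.

Lemma gen_raise_zero i f u : bounded f -> f i = 0%N ->
  G (eW (idx f u, inl i)) -> G (eW (idx (set_exp f i 1) u, inl i)).
Proof.
move=> bf f_i Gf; have lt_2 := expt_gt2 i.
pose b : IW := (idx (eps_exp i 2) set0, inl i).
have -> : (idx (set_exp f i 1) u, inl i) = br_idx2 b (idx f u, inl i).
  rewrite /br_idx2 /= der_idx_eps //.
  rewrite mul_idx_idx setU0; congr (_, _); apply: eq_idx => j.
  by rewrite /set_exp /eps_exp; case: eqP => [->|]; rewrite ?f_i ?addn0.
apply: gen_br_idx2 (gen_M i lt_2) Gf _ _.
  rewrite /br_coef2 parW_eps /= mul1r der_coef_eps // eqxx mul1r der_idx_eps //.
  rewrite mul_coef_epsr ?(ltnW lt_2) //.
  by rewrite f_i (ltnW lt_2) bin0 oner_eq0.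
by left; rewrite /br_coef1 /= der_coef_inl // f_i mul0r.
Qed.

Lemma gen_change_der k j u : j != k ->
    (forall a : IA, a.2 = u -> G (eW (a, inl k))) ->
  forall a : IA, a.2 = u -> G (eW (a, inl j)).
Proof.
move=> ne_jk Gk a a_2; rewrite (idx_val a) a_2.
set f := fun x => val (a.1 x); have bf : bounded f by move=> x; exact: ltn_ord.
have lt_1 := expt_gt1 k.
pose b : IW := (idx (eps_exp k 1) set0, inl j).
have -> : (idx f u, inl j) = br_idx2 b (idx f u, inl k).
  rewrite /br_idx2 /= der_idx_eps //.
  by rewrite mul_idx_idx setU0; congr (_, _); apply: eq_idx => x; rewrite eps_exp0 addn0.
apply: gen_br_idx2 (gen_M j lt_1) (Gk _ _) _ _ => //.
  rewrite /br_coef2 parW_eps /= mul1r der_coef_eps // eqxx mul1r der_idx_eps //.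
  rewrite mul_coef_epsr ?expt_gt0 //.
  by rewrite /= addn0 bf binn oner_eq0.
by right; apply: Gk; rewrite /br_idx1 /mul_idx /= set0U.
Qed.

Lemma gen_mul_P (i j : 'I_m) (k l : 'I_n) f (u : {set 'I_n}) :
    k != l -> k \notin u -> l \notin u -> bounded f -> (0 < f i)%N ->
  G (eW (idx f u, inl j)) -> G (eW (idx (dec_exp f i) ([set k; l] :|: u), inl j)).
Proof.
move=> ne_kl k_u l_u bf f_i Gf.
pose b : IW := (idx zero_exp [set k; l], inl i).
have -> : (idx (dec_exp f i) ([set k; l] :|: u), inl j) = br_idx1 b (idx f u, inl j).
  by rewrite /br_idx1 /= der_idx_inl // mul_idx_idx; congr (_, _); apply: eq_idx.
apply: gen_br_idx1 (gen_P i ne_kl) Gf _ _.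
  rewrite /br_coef1 /= der_idx_inl // der_coef_inl // f_i mul1r.
  rewrite mul_coef_zerol; last exact: bounded_dec.
  suff -> : [set k; l] :&: u == set0 by rewrite signr_eq0.
  apply/eqP/setP => x; rewrite !inE.
  by case: eqP => [->|_]; [rewrite (negbTE k_u) | case: eqP => [->|]; rewrite ?(negbTE l_u)].
by left; rewrite /br_coef2 /= der_coef_zero mul0r mulr0.
Qed.

Lemma gen_mul_N (i : 'I_m) (k l : 'I_n) f (u : {set 'I_n}) :
    k \notin u -> l \notin u -> bounded f ->
  G (eW (idx f u, inl i)) -> G (eW (idx f (u :|: [set k]), inr l)).
Proof.
move=> k_u l_u bf Gf; have lt_1 := expt_gt1 i.
have der_x : der_idx (inl i) (idx (eps_exp i 1) [set k]) = idx zero_exp [set k].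
  by rewrite der_idx_eps //; exact: eq_idx (eps_exp0 i).
pose c : IW := (idx (eps_exp i 1) [set k], inr l).
have -> : (idx f (u :|: [set k]), inr l) = br_idx1 (idx f u, inl i) c.
  by rewrite /br_idx1 /= der_x mul_idx_idx; congr (_, _); apply: eq_idx => x; rewrite addn0.
apply: gen_br_idx1 Gf (gen_N i k l) _ _.
  rewrite /br_coef1 /= der_x (der_coef_inl _ _ (bounded_eps lt_1)) /eps_exp eqxx mul1r.
  rewrite mul_coef_zeror //; suff -> : u :&: [set k] == set0 by rewrite signr_eq0.
  by apply/eqP/setP => x; rewrite !inE; case: eqP => [->|]; rewrite ?(negbTE k_u) ?andbF.
by left; rewrite /br_coef2 /= der_coef_inr ?mul0r ?mulr0.
Qed.

Lemma gen_lower_by i d f u r : bounded f -> (d <= f i)%N ->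
  G (eW (idx f u, r)) -> G (eW (idx (set_exp f i (f i - d)) u, r)).
Proof.
move=> bf; elim: d => [_|d IH le_d Gf].
  by rewrite (@eq_idx _ f) // => j; rewrite /set_exp subn0; case: eqP => [->|].
have lt_d : (f i - d < P i)%N by apply: leq_ltn_trans (leq_subr _ _) (bf i).
have pos_i : (0 < set_exp f i (f i - d) i)%N by rewrite /set_exp eqxx subn_gt0.
have := gen_lower (bounded_set bf lt_d) pos_i (IH (ltnW le_d) Gf).
rewrite (@eq_idx _ (set_exp f i (f i - d.+1))) // => j.
by rewrite /dec_exp /set_exp subnS; case: eqP.
Qed.

Lemma gen_lower_to f g u r : bounded f -> (forall j, g j <= f j)%N ->
  G (eW (idx f u, r)) -> G (eW (idx g u, r)).
Proof.
move=> bf le_gf; apply: (exp_coordinatewise (Q := fun h => G (eW (idx h u, r)))).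
  by move=> h h' eq_h; rewrite (eq_idx u eq_h).
move=> h i h_fg h_i Gh.
have bh : bounded h.
  by move=> j; case: (h_fg j) => ->; last apply: leq_ltn_trans (le_gf j) _; exact: bf.
have le_h : (f i - g i <= h i)%N by rewrite h_i leq_subr.
by have := gen_lower_by bh le_h Gh; rewrite h_i subKn ?le_gf.
Qed.

Lemma gen_top u r : G (eW (idx all_ones u, r)) -> G (eW (idx top_exp u, r)).
Proof.
apply: (exp_coordinatewise (Q := fun h => G (eW (idx h u, r)))) => [h h' eq_h|h i h_1t h_i Gh].
  by rewrite (eq_idx u eq_h).
have bh : bounded h by move=> j; case: (h_1t j) => ->; [exact: expt_gt1 | exact: bounded_top].
by apply: gen_raise => // [|_]; [exact: bounded_top | exact: one_sub_top_neq0].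
Qed.

Lemma gen_from_ones u r :
  G (eW (idx all_ones u, r)) -> forall a : IA, a.2 = u -> G (eW (a, r)).
Proof.
move=> Gones a a_2; rewrite (idx_val a) a_2.
apply: gen_lower_to (gen_top Gones) => [|j]; first exact: bounded_top.
by rewrite /top_exp -ltnS prednK ?expt_gt0 // ltn_ord.
Qed.

Lemma gen_base k s : s != k -> G (eW (idx (ones_but k) set0, inl k)).
Proof.
move=> ne_sk; have lt_1 := expt_gt1 s.
apply: (exp_coordinatewise (Q := fun h => G (eW (idx h set0, inl k)))) (gen_M k lt_1).
  by move=> h h' eq_h; rewrite (eq_idx _ eq_h).
move=> h i h_fg h_i Gh.
have h_01 j : (h j <= 1)%N.
  by case: (h_fg j) => ->; rewrite /eps_exp /ones_but; case: ifP.
have bh : bounded h by move=> j; apply: leq_ltn_trans (h_01 j) (expt_gt1 j).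
have [i_ks|] := boolP ((i == k) || (i == s)).
  rewrite (@eq_idx _ h) // => j; rewrite /set_exp; case: eqP => // ->; rewrite h_i.
  case/orP: i_ks => /eqP ->; rewrite /ones_but /eps_exp !eqxx ?(negbTE ne_sk) //.
  by rewrite eq_sym (negbTE ne_sk).
rewrite negb_or => /andP [ne_ik ne_is].
have h_s : h s = 1%N by case: (h_fg s) => ->; rewrite /eps_exp /ones_but ?eqxx ?(negbTE ne_sk).
have h_i0 : h i = 0%N by rewrite h_i /eps_exp (negbTE ne_is).
have ne_ki : (inl k : Yidx m n) != inl i by apply: contraNneq ne_ik => -[->].
have G2 : G (eW (idx (set_exp h s 2) set0, inl k)).
  by apply: gen_raise bh h_s (expt_gt2 s) _ Gh => -[e_ks]; rewrite e_ks eqxx in ne_sk.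
have h2_i : set_exp h s 2 i = 0%N by rewrite /set_exp (negbTE ne_is).
have h2_s : (0 < set_exp h s 2 s)%N by rewrite /set_exp eqxx.
have := gen_transfer ne_is (bounded_set bh (expt_gt2 s)) h2_i h2_s (expt_gt1 i) ne_ki G2.
rewrite (@eq_idx _ (set_exp h i (ones_but k i))) // => j.
rewrite /set_exp /dec_exp /ones_but (negbTE ne_ik).
by case: eqP => // _; case: eqP => [->|]; rewrite ?eqxx ?h_s.
Qed.

Lemma gen_from_ones_but (k : 'I_m) u : G (eW (idx (ones_but k) u, inl k)) ->
  forall j (a : IA), a.2 = u -> G (eW (a, inl j)).
Proof.
move=> G0.
have b_ones : bounded (ones_but k).
  by move=> j; rewrite /ones_but; case: ifP => _; [exact: expt_gt0 | exact: expt_gt1].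
have Gones : G (eW (idx all_ones u, inl k)).
  rewrite (@eq_idx _ (set_exp (ones_but k) k 1)); last first.
    by move=> j; rewrite /set_exp /ones_but; case: eqP.
  by apply: gen_raise_zero G0 => //; rewrite /ones_but eqxx.
move=> j; have [->|ne_jk] := eqVneq j k; first exact: gen_from_ones.
exact: gen_change_der ne_jk (gen_from_ones Gones).
Qed.

Lemma gen_even (k s : 'I_m) : s != k -> forall u : {set 'I_n}, ~~ odd #|u| ->
  forall j (a : IA), a.2 = u -> G (eW (a, inl j)).
Proof.
move=> ne_sk u; have [N] := ubnP #|u|; elim: N u => // N IH u lt_uN even_u.
have [->|[k1 k1_u]] := set_0Vmem u; first exact: gen_from_ones_but (gen_base ne_sk).
have /set0Pn [l] : u :\ k1 != set0.
  by rewrite -card_gt0; move: even_u; rewrite (cardsD1 k1 u) k1_u; case: #|_|.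
rewrite !inE => /andP [ne_lk1 l_u].
set u' := u :\ k1 :\ l.
have card_u : #|u| = #|u'|.+2 by rewrite (cardsD1 k1 u) k1_u (cardsD1 l (u :\ k1)) !inE ne_lk1 l_u.
have k1_u' : k1 \notin u' by rewrite !inE eqxx andbF.
have l_u' : l \notin u' by rewrite !inE eqxx.
have Gu' : G (eW (idx all_ones u', inl k)).
  apply: IH => //; first by move: lt_uN; rewrite card_u ltnS; exact: ltnW.
  by move: even_u; rewrite card_u /= negbK.
have := gen_mul_P (i := k) (ne_lk1 : l != k1) l_u' k1_u' expt_gt1 isT Gu'.
rewrite (@eq_idx (dec_exp all_ones k) (ones_but k)) => [|x]; last first.
  by rewrite /dec_exp /ones_but; case: eqP.
suff -> : [set l; k1] :|: u' = u by apply: gen_from_ones_but.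
apply/setP => x; rewrite !inE; case: (eqVneq x l) => [->|_]; first by rewrite l_u.
by case: (eqVneq x k1) => [->|] //=; rewrite k1_u.
Qed.

Lemma gen_odd (k s : 'I_m) : s != k -> forall u : {set 'I_n}, odd #|u| ->
  forall l (a : IA), a.2 = u -> G (eW (a, inr l)).
Proof.
move=> ne_sk u odd_u l a a_2.
have [k1 [k1_u l_u']] : exists k1, k1 \in u /\ l \notin u :\ k1.
  have [l_u|l_u] := boolP (l \in u); first by exists l; rewrite !inE eqxx.
  have /set0Pn [k1 k1_u] : u != set0 by apply: contraTneq odd_u => ->; rewrite cards0.
  by exists k1; rewrite !inE (negbTE l_u) andbF.
have even_u' : ~~ odd #|u :\ k1| by move: odd_u; rewrite (cardsD1 k1 u) k1_u.
have k1_u' : k1 \notin u :\ k1 by rewrite !inE eqxx.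
have bf : bounded (fun j => val (a.1 j)) by move=> j; exact: ltn_ord.
have Gk : G (eW (idx (fun j => val (a.1 j)) (u :\ k1), inl k)).
  exact: (gen_even ne_sk even_u').
by rewrite (idx_val a) a_2 -(setD1K k1_u) setUC; exact: gen_mul_N k1_u' l_u' bf Gk.
Qed.

Lemma gen_eW_even (k s : 'I_m) (b : IW) : s != k -> parW b = false -> G (eW b).
Proof.
move=> ne_sk; case: b => [a [j|l]]; rewrite /parW /=.
  by rewrite addbF => even_a; apply: (gen_even ne_sk (negbT even_a)).
by rewrite addbT => /negbFE odd_a; apply: (gen_odd ne_sk odd_a).
Qed.

End Generation.

Definition genMNP (X : W) : Prop := genM X \/ genN X \/ genP X.

Lemma genMNP_evenW (X : W) : (forall i, 1 < P i)%N -> genMNP X -> evenW X.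
Proof.
move=> P_gt1 [[i [j [q [le_q ->]]]] | [[i [k [l ->]]] | [i [k [l ->]]]]].
- rewrite xdpE ?vD_eA; first exact/evenW_eW/parW_eps.
  by apply: leq_ltn_trans le_q _; rewrite subn1 ltn_predL expt_gt0.
- by rewrite vD_xev_xod //; apply: evenW_eW; rewrite /parW /idx /= cards1.
- rewrite vD_xod_xod; have [->|ne_kl] := eqVneq k l.
    have /eqP -> : mul_coef (idx zero_exp [set l]) (idx zero_exp [set l]) == 0.
      by rewrite mul_coef_xod_eq0.
    by rewrite scW0; exact: evenW0.
  by apply/evenW_scW/evenW_eW; rewrite /parW /idx /= cards2 ne_kl.
Qed.

Lemma genLie_genMNP_evenW (X : W) : (forall i, 1 < P i)%N -> genLie genMNP X -> evenW X.
Proof.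
move=> P_gt1; elim=> {X} [Y MNP_Y | | Y Z _ eY _ eZ | k Y _ eY | Y Z _ eY _ eZ].
- exact: genMNP_evenW.
- exact: evenW0.
- exact: evenW_add.
- exact: evenW_scW.
- exact: evenW_brW.
Qed.

Lemma genMNP_M i s q : (q < P i)%N -> genLie genMNP (eW (idx (eps_exp i q) set0, inl s)).
Proof.
move=> lt_q; rewrite -vD_eA -xdpE //; apply: genLie_base; left; exists i, s, q.
by rewrite subn1 -ltnS prednK ?expt_gt0.
Qed.

Lemma genMNP_N i k l : (1 < P i)%N -> genLie genMNP (eW (idx (eps_exp i 1) [set k], inr l)).
Proof. by move=> lt_1; rewrite -vD_xev_xod //; apply: genLie_base; right; left; exists i, k, l. Qed.

Lemma genMNP_P i k l : k != l -> genLie genMNP (eW (idx zero_exp [set k; l], inl i)).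
Proof.
move=> ne_kl; apply: (@gen_scale_inv _ (mul_coef (idx zero_exp [set k]) (idx zero_exp [set l]))).
  by rewrite mul_coef_xod_eq0.
by rewrite -vD_xod_xod; apply: genLie_base; right; right; exists i, k, l.
Qed.

Lemma evenW_genLie_genMNP (X : W) : (forall i, (P i)%:R = 0 :> F) -> 2%:R != 0 :> F ->
  (1 < m)%N -> evenW X -> genLie genMNP X.
Proof.
move=> P_char two_neq0 m_gt1 even_X; rewrite [X]W_sum_eW; apply: gen_sum => b.
have [-> | nz_b] := eqVneq (X b) 0; first by rewrite scW0; exact: genLie_zero.
have P_gt1 := expt_gt1 P_char two_neq0.
have ne_10 : Ordinal m_gt1 != Ordinal (ltnW m_gt1) by [].
apply/genLie_scale/(gen_eW_even P_char two_neq0 genMNP_M _ genMNP_P ne_10).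
  by move=> i k l; exact: genMNP_N.
exact: even_X.
Qed.

End WittBasis.

Theorem proposition2p2p1 (F : fieldType) (p m n : nat) (t : 'I_m -> nat) :
  prime p -> (3 < p)%N -> p \in [pchar F] ->
  (3 <= m)%N -> (3 <= n)%N -> (forall i, 0 < t i)%N ->
  forall X : Witt F p n t,
    genLie (fun Y => genM Y \/ genN Y \/ genP Y) X <-> evenW X.
Proof.
(* Of the size hypotheses only [1 < m] and [2 < p] matter; [3 <= n] is unused. *)
move=> p_prime p_gt3 char_p m_ge3 _ t_gt0 X.
have p_gt0 := prime_gt0 p_prime.
have P_char i : (p ^ t i)%:R = 0 :> F.
  by apply/eqP; rewrite -(dvdn_pcharf char_p) dvdn_exp.
have two_neq0 : 2%:R != 0 :> F.
  by rewrite -(dvdn_pcharf char_p) gtnNdvd // (ltn_trans _ p_gt3).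
split; first exact/genLie_genMNP_evenW/(expt_gt1 p_gt0 P_char two_neq0).
by apply: evenW_genLie_genMNP; rewrite // (leq_trans _ m_ge3).
Qed.
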